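(* Let $T:\mathbb{R}^d\to\mathbb{R}^d$ be nonexpansive with respect to a norm $\|\cdot\|$ on $\mathbb{R}^d$, with $\operatorname{Fix}T\neq\emptyset$. Let $(\beta_n)_{n\ge1}\subseteq(0,1)$ be nondecreasing with $\lim_n\beta_n=1$, let $x^0\in\mathbb{R}^d$, and let $(x^n)_{n\ge1}$ be generated by $x^n=(1-\beta_n)x^0+\beta_n(Tx^{n-1}+U_n)$, $n\ge1$, where $(U_n)$ are random vectors with $\mathbb{E}(U_n)=0$ and $\sigma_n:=\mathbb{E}(\|U_n\|)<\infty$. Then: (i) If there is $M>0$ with $\|Tx\|\le M$ for all $x\in\mathbb{R}^d$, then $\sup_{n\ge0}\mathbb{E}(\|Tx^n-x^0\|)\le M+\|x^0\|$. (ii) If $S:=\sup_{n\ge1}\sum_{i=1}^n B_i^n\sigma_i<+\infty$, then $\sup_{n\ge0}\mathbb{E}(\|Tx^n-x^0\|)\le 2\operatorname{dist}(x^0,\operatorname{Fix}T)+S$. In particular, if $\sum_n\sigma_n<+\infty$ then $\sup_{n\ge0}\mathbb{E}(\|Tx^n-x^0\|)<+\infty$.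
   Context: Notation: $B_i^n:=\prod_{j=i}^n\beta_j$ (with $B_i^n=1$ if $i>n$). $\operatorname{dist}(x^0,\operatorname{Fix}T)=\inf_{x^*\in\operatorname{Fix}T}\|x^0-x^*\|$. *)

From HB Require Import structures.
From mathcomp Require Import all_boot all_order all_algebra.
From mathcomp Require Import all_classical all_reals all_analysis.
Set Implicit Arguments. Unset Strict Implicit. Unset Printing Implicit Defensive.
Import Order.TTheory GRing.Theory Num.Theory.
Import numFieldNormedType.Exports.
Local Open Scope classical_set_scope.
Local Open Scope ring_scope.

Definition is_norm (R : realType) (d : nat) (N : 'rV[R]_d -> R) : Prop :=
  [/\ (forall x, N x = 0 -> x = 0),
      (forall (a : R) x, N (a *: x) = `|a| * N x) &
      (forall x y, N (x + y) <= N x + N y)].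

Definition nonexpansive (R : realType) (d : nat) (N : 'rV[R]_d -> R)
  (T : 'rV[R]_d -> 'rV[R]_d) : Prop :=
  forall x y, N (T x - T y) <= N (x - y).

Definition FixT (R : realType) (d : nat) (T : 'rV[R]_d -> 'rV[R]_d) :
  set 'rV[R]_d := [set x | T x = x].

Definition distFix (R : realType) (d : nat) (N : 'rV[R]_d -> R)
  (T : 'rV[R]_d -> 'rV[R]_d) (x0 : 'rV[R]_d) : R :=
  inf [set N (x0 - y) | y in FixT T].

(* B_i^n = prod_{j=i}^n beta_j  (empty product = 1 when i > n). *)
Definition Bprod (R : realType) (beta : nat -> R) (i n : nat) : R :=
  \prod_(i <= j < n.+1) beta j.

Definition sigmaE (R : realType) (dT : measure_display) (Om : measurableType dT)
  (P : probability Om R) (d : nat) (N : 'rV[R]_d -> R)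
  (U : nat -> Om -> 'rV[R]_d) (n : nat) : \bar R :=
  (\int[P]_w (N (U n w))%:E)%E.

From HB Require Import structures.
From mathcomp Require Import all_boot all_order all_algebra.
From mathcomp Require Import all_classical all_reals all_analysis.
From mathcomp Require Import lra ring measurable_realfun.
Import Order.TTheory GRing.Theory Num.Theory.
Import numFieldNormedType.Exports.
Local Open Scope classical_set_scope.
Local Open Scope ring_scope.

(* For a fixed point y the Halpern step is a convex combination of x^0 - y and
   T x^n - T y plus the noise, so nonexpansiveness gives pathwise
   N(x^n - y) <= N(x^0 - y) + sum_i B_i^n N(U_i), hence
   N(T x^n - x^0) <= 2 N(x^0 - y) + sum_i B_i^n N(U_i).  Integrating gives
   E N(T x^n - x^0) <= 2 N(x^0 - y) + sum_i B_i^n sigma_i; (ii) follows by taking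
   the infimum over y, the summable case from B_i^n <= 1, and (i) is the
   triangle inequality.
   Only N o U_i has to be measurable: N is the infimum of countably many
   coordinatewise Lipschitz bounds centred at rational points.  T o x^n need not
   be measurable, which is why the integral is only compared monotonically. *)

Definition rat_row (R : realType) (d : nat) (k : nat) : 'rV[R]_d :=
  map_mx ratr (odflt 0 (unpickle k) : 'rV[rat]_d).
Arguments rat_row {R d} k.

Lemma rat_row_approx {R : realType} {d : nat} (v : 'rV[R]_d) (e : R) : 0 < e ->
  exists k, forall j, `|v 0 j - rat_row k 0 j| <= e.
Proof.
move=> e0; have /choice[f fE] : forall j : 'I_d, exists r : rat,
    ratr r \in `](v 0 j - e), (v 0 j + e)[ by move=> j; apply: rat_in_itvoo; lra.
exists (pickle (\row_j f j)) => j; rewrite /rat_row pickleK !mxE.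
by move: (fE j); rewrite in_itv /= ler_norml => /andP[? ?]; apply/andP; split; lra.
Qed.

Section norm.
Context {R : realType} {d : nat} {N : 'rV[R]_d -> R}.
Hypothesis normN : is_norm N.

Lemma is_normZ a v : N (a *: v) = `|a| * N v.
Proof. by case: normN. Qed.

Lemma is_normD u v : N (u + v) <= N u + N v.
Proof. by case: normN. Qed.

Lemma is_norm0 : N 0 = 0.
Proof. by rewrite -(scale0r 0) is_normZ normr0 mul0r. Qed.

Lemma is_normN v : N (- v) = N v.
Proof. by rewrite -scaleN1r is_normZ normrN normr1 mul1r. Qed.

Lemma is_norm_ge0 v : 0 <= N v.
Proof. by have := is_normD v (- v); rewrite subrr is_norm0 is_normN; lra. Qed.

Lemma is_norm_distC u v : N (u - v) = N (v - u).
Proof. by rewrite -is_normN opprB. Qed.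

Lemma is_norm_sum (I : Type) (s : seq I) (F : I -> 'rV[R]_d) :
  N (\sum_(i <- s) F i) <= \sum_(i <- s) N (F i).
Proof.
apply: (big_ind2 (fun a b => N a <= b)) => [|a x b y ha hb|i _] //.
  by rewrite is_norm0.
by apply: le_trans (is_normD a b) _; exact: lerD.
Qed.

Definition norm_coord_ub (q v : 'rV[R]_d) : R :=
  N q + \sum_(j < d) `|v 0 j - q 0 j| * N (delta_mx 0 j).

Lemma is_norm_le_coord_ub q v : N v <= norm_coord_ub q v.
Proof.
have vqE : v - q = \sum_(j < d) (v 0 j - q 0 j) *: delta_mx 0 j.
  by rewrite [LHS]row_sum_delta; apply: eq_bigr => j _; rewrite !mxE.
rewrite -{1}(subrK q v) addrC vqE.
apply: le_trans (is_normD _ _) _; rewrite /norm_coord_ub lerD2l.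
apply: le_trans (is_norm_sum _ _ _) _.
by apply: ler_sum => j _; rewrite is_normZ.
Qed.

Lemma is_norm_einfs v :
  (N v)%:E = einfs (fun k => (norm_coord_ub (rat_row k) v)%:E) 0%N.
Proof.
apply/eqP; rewrite eq_le; apply/andP; split.
  by apply: le_ereal_inf_tmp => _ [k _ <-]; rewrite lee_fin is_norm_le_coord_ub.
apply/lee_addgt0Pr => e e0.
pose K := \sum_(j < d) N (delta_mx 0 j).
have K0 : 0 <= K by apply: sumr_ge0 => j _; exact: is_norm_ge0.
have K1 : 0 < 2 * K + 1 by lra.
pose del := e / (2 * K + 1).
have del0 : 0 < del by rewrite divr_gt0.
have [k vk] := rat_row_approx v del del0; set q := rat_row k in vk *.
have delE : del * (2 * K + 1) = e by rewrite mulfVK // gt_eqF.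
have dist_le (a b : 'rV[R]_d) : (forall j, `|a 0 j - b 0 j| <= del) ->
    \sum_(j < d) `|a 0 j - b 0 j| * N (delta_mx 0 j) <= del * K.
  move=> ab; rewrite mulr_sumr; apply: ler_sum => j _.
  by apply: ler_wpM2r; [exact: is_norm_ge0 | exact: ab].
have vq := dist_le _ _ vk.
have qv : \sum_(j < d) `|q 0 j - v 0 j| * N (delta_mx 0 j) <= del * K.
  by apply: dist_le => j; rewrite distrC.
apply: le_trans (ereal_inf_lbound _) _; first by exists k.
have := is_norm_le_coord_ub v q; rewrite /norm_coord_ub -EFinD lee_fin.
nra.
Qed.

Lemma measurable_is_norm (dT : measure_display) (Om : measurableType dT)
    (V : Om -> 'rV[R]_d) :
  (forall j, measurable_fun setT (fun w => V w ord0 j)) ->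
  measurable_fun setT (fun w => (N (V w))%:E).
Proof.
move=> mV; pose ub k w := (norm_coord_ub (rat_row k) (V w))%:E.
have -> : (fun w => (N (V w))%:E) = fun w => einfs (ub^~ w) 0%N.
  by apply/funext => w; exact: is_norm_einfs.
apply: measurable_fun_einfs => k.
apply/measurable_EFinP; apply: measurable_funD; first exact: measurable_cst.
apply: measurable_sum => j; apply: measurable_funM; last exact: measurable_cst.
apply: measurableT_comp; first exact: normr_measurable.
by apply: measurable_funB; [exact: mV | exact: measurable_cst].
Qed.

End norm.

Section Bprod.
Context {R : realType}.
Variable beta : nat -> R.

Lemma BprodSr i n :
  (i <= n.+1)%N -> Bprod beta i n.+1 = Bprod beta i n * beta n.+1.
Proof. by move=> i_le; rewrite /Bprod big_nat_recr. Qed.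

Lemma Bprodnn n : Bprod beta n n = beta n.
Proof. by rewrite /Bprod big_nat1. Qed.

Lemma Bprod_ge0 i n : (forall j, (i <= j)%N -> 0 <= beta j) -> 0 <= Bprod beta i n.
Proof.
move=> beta0; rewrite /Bprod big_nat_cond.
by apply: prodr_ge0 => j /andP[/andP[/beta0]]. 
Qed.

Lemma Bprod_le1 i n :
  (forall j, (i <= j)%N -> 0 <= beta j <= 1) -> Bprod beta i n <= 1.
Proof.
move=> beta01; rewrite /Bprod big_nat_cond.
by apply: prodr_ile1 => j /andP[/andP[/beta01]].
Qed.

Lemma sum_BprodSr m n (a : nat -> R) : (m <= n.+1)%N ->
  \sum_(m <= i < n.+2) Bprod beta i n.+1 * a i =
  beta n.+1 * (\sum_(m <= i < n.+1) Bprod beta i n * a i + a n.+1).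
Proof.
move=> m_le; rewrite big_nat_recr //= Bprodnn mulrDr mulr_sumr; congr (_ + _).
by apply: eq_big_nat => i /andP[_ i_lt]; rewrite BprodSr ?(ltnW i_lt) // mulrAC mulrC.
Qed.

End Bprod.

Section halpern_path.
Context {R : realType} {d : nat} {N : 'rV[R]_d -> R} {T : 'rV[R]_d -> 'rV[R]_d}.
Context {beta : nat -> R} {x0 : 'rV[R]_d} {u xs : nat -> 'rV[R]_d}.
Hypotheses (normN : is_norm N) (nonexpT : nonexpansive N T).
Hypothesis beta01 : forall n, (1 <= n)%N -> 0 <= beta n <= 1.
Hypothesis xs0 : xs 0%N = x0.
Hypothesis xsS :
  forall n, xs n.+1 = (1 - beta n.+1) *: x0 + beta n.+1 *: (T (xs n) + u n.+1).

Lemma halpern_dist_fix_le y : T y = y -> forall n,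
  N (xs n - y) <= N (x0 - y) + \sum_(1 <= i < n.+1) Bprod beta i n * N (u i).
Proof.
move=> Ty; elim=> [|n IH]; first by rewrite big_geq // addr0 xs0.
have /andP[b0 b1] := beta01 n.+1 isT.
have stepE : xs n.+1 - y = (1 - beta n.+1) *: (x0 - y)
    + beta n.+1 *: (T (xs n) - T y) + beta n.+1 *: u n.+1.
  by rewrite xsS Ty; apply/rowP => j; rewrite !mxE; ring.
set a := (1 - beta n.+1) *: (x0 - y); set b := beta n.+1 *: (T (xs n) - T y).
have convex := is_normD normN a b.
have noise := is_normD normN (a + b) (beta n.+1 *: u n.+1).
rewrite !(is_normZ normN) !ger0_norm ?subr_ge0 // in convex noise.
have := ler_wpM2l b0 (le_trans (nonexpT (xs n) y) IH).
rewrite stepE sum_BprodSr //; lra.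
Qed.

Lemma halpern_T_dist_le y : T y = y -> forall n,
  N (T (xs n) - x0) <=
  2 * N (x0 - y) + \sum_(1 <= i < n.+1) Bprod beta i n * N (u i).
Proof.
move=> Ty n; have := halpern_dist_fix_le y Ty n; have := nonexpT (xs n) y.
have := is_normD normN (T (xs n) - T y) (y - x0).
by rewrite Ty (is_norm_distC normN y) addrA subrK; lra.
Qed.

End halpern_path.

(* No measurability is needed: for nonnegative functions the integral is a
   supremum over the simple functions below the integrand. *)
Lemma ge0_le_integralT {dT : measure_display} {Om : measurableType dT}
    {R : realType} (mu : {measure set Om -> \bar R}) {f g : Om -> \bar R} :
  (forall w, 0 <= f w)%E -> (forall w, f w <= g w)%E ->
  (\int[mu]_w f w <= \int[mu]_w g w)%E.
Proof.
move=> f0 fg; have g0 w : (0 <= g w)%E by exact: le_trans (f0 w) (fg w).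
rewrite (ge0_integralTE mu f0) (ge0_integralTE mu g0) /=.
apply: ereal_sup_le => _ [h hf <-]; exists h => //= w.
exact: le_trans (hf w) (fg w).
Qed.

Lemma integral_cst_add_sum (dT : measure_display) (Om : measurableType dT)
    (R : realType) (P : probability Om R) (I : Type) (s : seq I)
    (c : R) (b : I -> R) (G : I -> Om -> R) :
  0 <= c -> (forall k, 0 <= b k) ->
  (forall k, measurable_fun setT (fun w => (G k w)%:E)) ->
  (forall k w, 0 <= G k w) ->
  (\int[P]_w (c + \sum_(k <- s) b k * G k w)%:E =
   c%:E + \sum_(k <- s) (b k)%:E * \int[P]_w (G k w)%:E)%E.
Proof.
move=> c0 b0 mG G0.
have mbG k : measurable_fun setT (fun w => (b k * G k w)%:E).
  apply/measurable_EFinP/measurable_funM; first exact: measurable_cst.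
  exact/measurable_EFinP/mG.
under eq_integral do rewrite EFinD -sumEFin.
have sum_ge0 w : (0 <= \sum_(k <- s) (b k * G k w)%:E)%E.
  by apply: sume_ge0 => k _; rewrite lee_fin mulr_ge0.
rewrite ge0_integralD //; [|exact: emeasurable_sum].
rewrite integral_cst //= probability_setT mule1 ge0_integral_sum //; last first.
  by move=> k w _; rewrite lee_fin mulr_ge0.
congr (_ + _)%E; apply: eq_bigr => k _.
under eq_integral do rewrite EFinM.
by rewrite ge0_integralZl_EFin // => w _; rewrite lee_fin.
Qed.

Lemma ler_affine_inf (R : realType) (E : set R) (a b z : R) :
  0 < a -> E !=set0 -> (forall e, E e -> z <= a * e + b) -> z <= a * inf E + b.
Proof.
move=> a0 E0 zE; suff : (z - b) / a <= inf E by rewrite ler_pdivrMr //; lra.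
by apply: lb_le_inf => // e Ee; rewrite ler_pdivrMr //; have := zE e Ee; lra.
Qed.

Section halpern_expectation.
Context {R : realType} {d : nat} {N : 'rV[R]_d -> R} {T : 'rV[R]_d -> 'rV[R]_d}.
Context {dT : measure_display} {Om : measurableType dT}.
Context {P : probability Om R} {beta : nat -> R} {x0 : 'rV[R]_d}.
Context {U x : nat -> Om -> 'rV[R]_d}.
Hypotheses (normN : is_norm N) (nonexpT : nonexpansive N T).
Hypothesis beta01 : forall n, (1 <= n)%N -> 0 <= beta n <= 1.
Hypothesis mU : forall n, (1 <= n)%N -> forall j,
  measurable_fun setT (fun w => U n w ord0 j).
Hypothesis x0E : forall w, x 0%N w = x0.
Hypothesis xS : forall n w,
  x n.+1 w = (1 - beta n.+1) *: x0 + beta n.+1 *: (T (x n w) + U n.+1 w).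

Local Notation expected_gap n := (\int[P]_w (N (T (x n w) - x0))%:E)%E.
Local Notation noise_bound n :=
  (\sum_(1 <= i < n.+1) ((Bprod beta i n)%:E * sigmaE P N U i))%E.

Lemma sigmaE_ge0 i : (0 <= sigmaE P N U i)%E.
Proof. by apply: integral_ge0 => w _; rewrite lee_fin (is_norm_ge0 normN). Qed.

Lemma Bprod01 i n : (1 <= i)%N -> 0 <= Bprod beta i n <= 1.
Proof.
move=> i_ge1; have beta01_from_i j : (i <= j)%N -> 0 <= beta j <= 1.
  by move/(leq_trans i_ge1); exact: beta01.
by apply/andP; split; [apply: Bprod_ge0 => j /beta01_from_i /andP[] | exact: Bprod_le1].
Qed.

Lemma noise_bound_ge0 n : (0 <= noise_bound n)%E.
Proof.
rewrite big_nat_cond; apply: sume_ge0 => i /andP[/andP[i_ge1 _] _].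
by rewrite mule_ge0 ?sigmaE_ge0 // lee_fin; case/andP: (Bprod01 i n i_ge1).
Qed.

Lemma expected_gap_le_fix y : T y = y -> forall n,
  (expected_gap n <= (2 * N (x0 - y))%:E + noise_bound n)%E.
Proof.
move=> Ty n.
pose path_bound w :=
  2 * N (x0 - y) + \sum_(1 <= i < n.+1) Bprod beta i n * N (U i w).
apply: le_trans (ge0_le_integralT P (g := fun w => (path_bound w)%:E) _ _) _.
- by move=> w; rewrite lee_fin (is_norm_ge0 normN).
- move=> w; rewrite lee_fin.
  exact: (halpern_T_dist_le normN nonexpT beta01 (x0E w) (fun m => xS m w) _ Ty).
rewrite /path_bound; under eq_integral do rewrite big_add1 /=.
rewrite big_add1 /= integral_cst_add_sum //.
- by rewrite mulr_ge0 // (is_norm_ge0 normN).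
- by move=> k; case/andP: (Bprod01 k.+1 n (ltn0Sn k)).
- by move=> k; apply: (measurable_is_norm normN) => j; exact: mU.
- by move=> k w; exact: (is_norm_ge0 normN).
Qed.

Lemma sup_expected_gap_le_bound M : (forall y, N (T y) <= M) ->
  (ereal_sup [set expected_gap n | n in [set: nat]] <= (M + N x0)%:E)%E.
Proof.
move=> TM; apply: ge_ereal_sup => _ [n _ <-].
apply: le_trans (ge0_le_integralT P (g := fun=> (M + N x0)%:E) _ _) _.
- by move=> w; rewrite lee_fin (is_norm_ge0 normN).
- move=> w; rewrite lee_fin; apply: le_trans (is_normD normN _ _) _.
  by rewrite (is_normN normN) lerD2r TM.
by rewrite integral_cst //= probability_setT mule1.
Qed.

Lemma sup_expected_gap_le_distFix : FixT T !=set0 ->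
  let S := ereal_sup [set noise_bound n | n in [set n | (1 <= n)%N]] in
  (S < +oo)%E ->
  (ereal_sup [set expected_gap n | n in [set: nat]]
     <= (2 * distFix N T x0)%:E + S)%E.
Proof.
move=> [y0 Ty0] S S_lt.
have le_S n : (noise_bound n <= S)%E.
  case: n => [|n]; last by apply: ereal_sup_ubound; exists n.+1.
  rewrite big_geq //; apply: le_trans (noise_bound_ge0 1) _.
  by apply: ereal_sup_ubound; exists 1%N.
have S_fin : S \is a fin_num.
  by rewrite ge0_fin_numE // (le_trans (noise_bound_ge0 0)).
apply: ge_ereal_sup => _ [n _ <-].
have gap_le y : T y = y -> (expected_gap n <= (2 * N (x0 - y))%:E + S)%E.
  by move=> Ty; apply: le_trans (expected_gap_le_fix y Ty n) _; rewrite leeD2l.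
have gap_fin : expected_gap n \is a fin_num.
  rewrite ge0_fin_numE ?integral_ge0 // => [|w _]; last first.
    by rewrite lee_fin (is_norm_ge0 normN).
  by apply: le_lt_trans (gap_le y0 Ty0) _; rewrite -(fineK S_fin) -EFinD ltry.
rewrite -(fineK gap_fin) -(fineK S_fin) -EFinD lee_fin.
apply: ler_affine_inf => //; first by exists (N (x0 - y0)), y0.
by move=> _ [y Ty <-]; rewrite -lee_fin EFinD !fineK //; exact: gap_le.
Qed.

Lemma sup_expected_gap_lt_summable : FixT T !=set0 ->
  (\sum_(1 <= n <oo) sigmaE P N U n < +oo)%E ->
  (ereal_sup [set expected_gap n | n in [set: nat]] < +oo)%E.
Proof.
move=> [y0 Ty0] sum_lt.
apply: (@le_lt_trans _ _
  ((2 * N (x0 - y0))%:E + \sum_(1 <= n <oo) sigmaE P N U n)%E); last first.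
  by rewrite lte_add_pinfty ?ltry.
apply: ge_ereal_sup => _ [n _ <-]; apply: le_trans (expected_gap_le_fix y0 Ty0 n) _.
rewrite leeD2l //; apply: le_trans (nneseries_lim_ge n.+1 (fun i _ _ => sigmaE_ge0 i)).
rewrite big_nat_cond [leRHS]big_nat_cond; apply: lee_sum => i /andP[/andP[i_ge1 _] _].
by have /andP[B0 B1] := Bprod01 i n i_ge1; rewrite gee_pMl ?sigmaE_ge0 // lee_fin.
Qed.

End halpern_expectation.

Theorem lemma1 (R : realType) (d : nat) (N : 'rV[R]_d -> R)
  (T : 'rV[R]_d -> 'rV[R]_d)
  (dT : measure_display) (Om : measurableType dT) (P : probability Om R)
  (beta : nat -> R) (x0 : 'rV[R]_d)
  (U : nat -> Om -> 'rV[R]_d) (x : nat -> Om -> 'rV[R]_d) :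
  is_norm N ->
  nonexpansive N T ->
  FixT T !=set0 ->
  (forall n, (1 <= n)%N -> 0 < beta n < 1) ->
  (forall n m, (1 <= n)%N -> (n <= m)%N -> beta n <= beta m) ->
  beta @ \oo --> (1 : R) ->
  (* the noise U_n (n >= 1): random vectors with E(U_n) = 0 and E ||U_n|| < oo *)
  (forall n, (1 <= n)%N -> forall i : 'I_d,
     measurable_fun setT (fun w => U n w ord0 i)) ->
  (forall n, (1 <= n)%N -> forall i : 'I_d,
     P.-integrable setT (fun w => (U n w ord0 i)%:E)) ->
  (forall n, (1 <= n)%N -> forall i : 'I_d,
     (\int[P]_w (U n w ord0 i)%:E = 0)%E) ->
  (forall n, (1 <= n)%N -> (sigmaE P N U n < +oo)%E) ->
  (* the iteration *)
  (forall w, x 0%N w = x0) ->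
  (forall n w, (1 <= n)%N ->
     x n w = (1 - beta n) *: x0 + beta n *: (T (x n.-1 w) + U n w)) ->
  (* (i) *)
  (forall M : R, 0 < M -> (forall y, N (T y) <= M) ->
     (ereal_sup [set (\int[P]_w (N (T (x n w) - x0))%:E)%E | n in [set: nat]]
        <= (M + N x0)%:E)%E) /\
  (* (ii) *)
  (let S := ereal_sup [set (\sum_(1 <= i < n.+1)
                              ((Bprod beta i n)%:E * sigmaE P N U i))%E
                       | n in [set n | (1 <= n)%N]] in
   (S < +oo)%E ->
   (ereal_sup [set (\int[P]_w (N (T (x n w) - x0))%:E)%E | n in [set: nat]]
      <= (2 * distFix N T x0)%:E + S)%E) /\
  ((\sum_(1 <= n <oo) sigmaE P N U n < +oo)%E ->
   (ereal_sup [set (\int[P]_w (N (T (x n w) - x0))%:E)%E | n in [set: nat]]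
      < +oo)%E).
Proof.
move=> normN nonexpT FixT0 beta_in01 _ _ mU _ _ _ x0E xS.
have beta01 n : (1 <= n)%N -> 0 <= beta n <= 1.
  by move/beta_in01/andP=> [b0 b1]; rewrite !ltW.
have xS' n w := xS n.+1 w isT.
split; first by move=> M _; exact: (sup_expected_gap_le_bound normN).
split.
  exact: (sup_expected_gap_le_distFix normN nonexpT beta01 mU x0E xS' FixT0).
exact: (sup_expected_gap_lt_summable normN nonexpT beta01 mU x0E xS' FixT0).
Qed.
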